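(* Let $r \ge 2$ be such that $p_{r+1}^2 \ge p_r\#/2$. Then $$\max\{\,p_{r+1}-1,\ d(p_{r+1}^2)\,\} = 2p_{r-1}.$$
   Context: $p_k$ denotes the $k$-th prime ($p_1=2$, $p_2=3$, \dots). For a prime $p$, $p\# = \prod_{q\le p,\ q \text{ prime}} q$. For $r \ge 1$, $d(p_{r+1}^2)$ denotes the maximum of $q'-q$ over all pairs of consecutive primes $q<q'$ with $p_{r+1} \le q < q' \le p_{r+1}^2$ (equivalently, the maximum gap between consecutive integers coprime to $p_r\#$ lying in the interval $[p_{r+1}, p_{r+1}^2]$). *)

From mathcomp Require Import all_boot.
Set Implicit Arguments. Unset Strict Implicit. Unset Printing Implicit Defensive.

Lemma exists_prime_gt (n : nat) : exists p, (n < p) && prime p.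
Proof. by case: (prime_above n) => p H1 H2; exists p; rewrite H1 H2. Qed.

Definition nextp (n : nat) : nat := ex_minn (exists_prime_gt n).

(* pk k = p_k, the k-th prime (p_1 = 2, p_2 = 3, ...); pk 0 = 0 is a dummy. *)
Fixpoint pk (k : nat) : nat :=
  match k with
  | 0 => 0
  | k'.+1 => nextp (pk k')
  end.

Definition primorial (p : nat) : nat := \prod_(q < p.+1 | prime q) q.

(* maxgap L N = max of q' - q over consecutive primes q < q' with
   L <= q < q' <= N (0 if there is no such pair).  For a prime q the next
   consecutive prime is exactly nextp q. *)
Definition maxgap (L N : nat) : nat :=
  \max_(L <= q < N.+1 | prime q && (nextp q <= N)) (nextp q - q).

Definition dgap (r : nat) : nat := maxgap (pk r.+1) (pk r.+1 ^ 2).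

From mathcomp Require Import all_boot zify.

(* The hypothesis p_(r+1)^2 >= p_r#/2 is very restrictive: a Bonse-type
   inequality shows that 2 p_(r+1)^2 < p_r# as soon as r >= 5, so only
   r = 2, 3, 4 remain, and for these the identity is checked by computation. *)

Lemma nextpP n :
  [/\ n < nextp n, prime (nextp n) & forall m, n < m -> prime m -> nextp n <= m].
Proof.
rewrite /nextp; case: ex_minnP => p /andP[n_lt_p p_prime] p_min.
by split=> // m n_lt_m m_prime; apply: p_min; rewrite n_lt_m m_prime.
Qed.

Lemma nextp_eq n p :
  n < p -> prime p -> (forall m, n < m < p -> ~~ prime m) -> nextp n = p.
Proof.
move=> n_lt_p p_prime no_prime; have [n_lt_q q_prime q_min] := nextpP n.
apply/eqP; rewrite eqn_leq q_min // leqNgt; apply/negP => q_lt_p.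
by move: (no_prime _ (introT andP (conj n_lt_q q_lt_p))); rewrite q_prime.
Qed.

Lemma pk_lt k : pk k < pk k.+1.
Proof. by have [] := nextpP (pk k). Qed.

Lemma pk_prime k : prime (pk k.+1).
Proof. by have [] := nextpP (pk k). Qed.

Lemma pk_min k s : prime s -> pk k < s -> pk k.+1 <= s.
Proof. by move=> s_prime pk_lt_s; have [_ _] := nextpP (pk k); apply. Qed.

Lemma pk_leq i j : (pk i <= pk j) = (i <= j).
Proof.
apply: leq_mono; apply: (@homo_ltn _ pk (fun a b => a < b)) => //.
  exact: ltn_trans.
exact: pk_lt.
Qed.

Lemma pk_ltn i j : (pk i < pk j) = (i < j).
Proof. by rewrite !ltnNge pk_leq. Qed.

Lemma pk_ge k : k <= pk k.
Proof. by elim: k => // k IH; apply: leq_ltn_trans IH (pk_lt k). Qed.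

Lemma prime_pk s : prime s -> exists j, pk j = s.
Proof.
move=> s_prime.
suff reach j : s <= pk j -> exists i, pk i = s by apply: (reach s); exact: pk_ge.
elim: j => [|j IH] s_le; first by move: s_prime; rewrite leqn0 in s_le; rewrite (eqP s_le).
case: (leqP s (pk j)) => [/IH //|pk_lt_s].
by exists j.+1; apply/eqP; rewrite eqn_leq s_le pk_min.
Qed.

(* p_(k+1) >= 2k+1, since consecutive odd primes differ by at least 2. *)
Lemma pk_lower k : 2 * k + 1 <= pk k.+1.
Proof.
elim: k => [|k IH]; first exact: prime_gt0 (pk_prime 0).
have lt := pk_lt k.+1; have odd_pk : odd (pk k.+2).
  have := prime_gt1 (pk_prime k).
  by case: (even_prime (pk_prime k.+1)) => // two; rewrite two in lt; lia.
case: (ltngtP (pk k.+2) (2 * k.+1 + 1)) odd_pk => [|_ _|-> _]; [lia|done|lia].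
Qed.

(* Distinct primes strictly between p_i and p_j are among p_(i+1), ..., p_(j-1). *)
Lemma primes_between_size i j (ps : seq nat) :
  uniq ps -> {in ps, forall s, prime s /\ pk i < s < pk j} -> size ps <= j - i.+1.
Proof.
move=> ps_uniq ps_between.
have sub : {subset ps <= [seq pk l | l <- iota i.+1 (j - i.+1)]}.
  move=> s /ps_between[/prime_pk[l <-]]; rewrite !pk_ltn => /andP[i_lt_l l_lt_j].
  by apply: map_f; rewrite mem_iota; lia.
by have := uniq_leq_size ps_uniq sub; rewrite size_map size_iota.
Qed.

(* A computable next-prime function: the first prime in (n, 2n+2], or 0 if
   there is none. *)
Definition nextc (n : nat) : nat :=
  let s := iota n.+1 n.+2 in nth 0 s (find prime s).

Lemma nextp_small n : n <= 130 -> nextp n = nextc n.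
Proof.
have table : all (fun n => [&& n < nextc n, prime (nextc n)
                             & all (predC prime) (index_iota n.+1 (nextc n))])
                 (iota 0 131) by vm_compute.
move=> n_small; have n_in : n \in iota 0 131 by rewrite mem_iota.
have /and3P[n_lt_c c_prime c_gap] := allP table n n_in.
apply: (nextp_eq _ _ n_lt_c c_prime) => m /andP[n_lt_m m_lt_c].
by apply: (allP c_gap); rewrite mem_index_iota n_lt_m.
Qed.

Definition small_primes : seq nat := [:: 0; 2; 3; 5; 7; 11; 13; 17; 19; 23; 29; 31].

Lemma pk_small k : k < size small_primes -> pk k = nth 0 small_primes k.
Proof.
have table : all (fun k => (nth 0 small_primes k <= 130)
                   && (nextc (nth 0 small_primes k) == nth 0 small_primes k.+1))
                 (iota 0 11) by vm_compute.
elim: k => // k IH k_lt; have k_in : k \in iota 0 11 by rewrite mem_iota.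
have /andP[small /eqP <-] := allP table k k_in.
by rewrite -nextp_small // -IH // ltnW.
Qed.

Lemma maxgap_small L N : N <= 130 -> maxgap L N =
  \max_(L <= q < N.+1 | prime q && (nextc q <= N)) (nextc q - q).
Proof.
move=> N_small; rewrite /maxgap big_nat_cond [RHS]big_nat_cond.
apply: eq_big => [q|q /andP[/andP[_ q_lt] _]]; last by rewrite nextp_small //; lia.
case q_range: (L <= q < N.+1) => //=.
by rewrite nextp_small //; move: q_range; lia.
Qed.

Lemma primorial_pk0 : primorial (pk 0) = 1.
Proof. by rewrite /primorial big_mkcond big_ord1. Qed.

(* p_(k+1)# = p_k# * p_(k+1), as no prime lies strictly between p_k and p_(k+1). *)
Lemma primorialS k : primorial (pk k.+1) = primorial (pk k) * pk k.+1.
Proof.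
have primorialE p : primorial p = \prod_(0 <= q < p.+1) (if prime q then q else 1).
  by rewrite /primorial big_mkcond big_mkord.
have no_prime_between :
    \prod_((pk k).+1 <= q < pk k.+1) (if prime q then q else 1) = 1.
  apply: big1_seq => q; rewrite mem_index_iota => /andP[_ /andP[pk_lt_q q_lt]].
  case: ifP => // q_prime.
  by have := pk_min _ _ q_prime pk_lt_q; rewrite leqNgt q_lt.
rewrite !primorialE (big_cat_nat _ (n := (pk k).+1)) //; last by have := pk_lt k; lia.
rewrite (@big_nat_recr _ _ _ (pk k.+1)) ?pk_lt // no_prime_between.
by rewrite pk_prime /= mul1n.
Qed.

Lemma primorial_gt0 k : 0 < primorial (pk k).
Proof.
elim: k => [|k IH]; first by rewrite primorial_pk0.
by rewrite primorialS muln_gt0 IH prime_gt0 // pk_prime.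
Qed.

Lemma primorial_dvd p s : prime s -> s <= p -> s %| primorial p.
Proof.
move=> s_prime s_le; have s_lt : s < p.+1 by [].
by rewrite /primorial (bigD1 (Ordinal s_lt)) //= dvdn_mulr.
Qed.

Lemma primorial_le_pow k : primorial (pk k) <= pk k ^ k.
Proof.
elim: k => [|k IH]; first by rewrite primorial_pk0.
rewrite primorialS expnSr leq_mul2r; apply/orP; right; apply: leq_trans IH _.
by case: k => // k; rewrite leq_exp2r // ltnW // pk_lt.
Qed.

(* p_r# >= p_i# * p_(i+1)^(r-i): each of the primes p_(i+1), ..., p_r is >= p_(i+1). *)
Lemma primorial_lower i r :
  i <= r -> primorial (pk i) * pk i.+1 ^ (r - i) <= primorial (pk r).
Proof.
elim: r => [|r IH] i_le; first by move: i_le; rewrite leqn0 => /eqP->; rewrite muln1.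
case: (ltngtP i r.+1) i_le => // [i_lt _|-> _]; last by rewrite subnn muln1.
rewrite primorialS subSn // expnS mulnCA mulnC.
by apply: leq_mul; [exact: IH | rewrite pk_leq].
Qed.

Lemma prime_dvd_pred_mul p a m :
  prime p -> p %| a * m - 1 -> 0 < a * m -> ~~ (p %| m).
Proof.
move=> p_prime p_dvd am_gt0; apply/negP => p_dvd_m.
have := dvdn_sub (dvdn_mull a p_dvd_m) p_dvd.
have -> : a * m - (a * m - 1) = 1 by lia.
by rewrite dvdn1 => /eqP p1; move: p_prime; rewrite p1.
Qed.

Lemma prime_dvd_pred_primorial p a k :
  prime p -> p %| a * primorial (pk k) - 1 -> 0 < a -> pk k.+1 <= p.
Proof.
move=> p_prime p_dvd a_gt0; apply: pk_min => //; rewrite ltnNge; apply/negP => p_le.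
have am_gt0 : 0 < a * primorial (pk k) by rewrite muln_gt0 a_gt0 primorial_gt0.
by have := prime_dvd_pred_mul _ _ _ p_prime p_dvd am_gt0; rewrite primorial_dvd.
Qed.

Lemma prime_dvd_preds p a b m :
  prime p -> ~~ (p %| m) -> 0 < a * m -> a <= b ->
  p %| a * m - 1 -> p %| b * m - 1 -> p %| b - a.
Proof.
move=> p_prime p_ndvd_m am_gt0 a_le_b dvd_a dvd_b.
have am_le : a * m <= b * m by rewrite leq_mul2r a_le_b orbT.
have := dvdn_sub dvd_b dvd_a.
have -> : b * m - 1 - (a * m - 1) = (b - a) * m by rewrite mulnBl; lia.
by rewrite Euclid_dvdM // (negbTE p_ndvd_m) orbF.
Qed.

(* Bonse-type step: p_(k+q) <= q p_k# for q = p_(k+1) and k >= 2.  The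
   smallest prime factors of the q numbers i p_k# - 1, 1 <= i <= q, are
   pairwise distinct and lie in (p_k, q p_k#). *)
Lemma pk_shift_le k : 2 <= k -> pk (k + pk k.+1) <= pk k.+1 * primorial (pk k).
Proof.
move=> k_ge2; set m := primorial (pk k); set q := pk k.+1.
have m_ge3 : 3 <= m.
  have pk_k_prime : prime (pk k) by case: k k_ge2 {m q} => // k _; exact: pk_prime.
  have pk_ge3 : 3 <= pk k by case: k k_ge2 {m q pk_k_prime} => // k k_ge1; have := pk_lower k; lia.
  by apply: leq_trans pk_ge3 (dvdn_leq (primorial_gt0 k) (primorial_dvd _ _ pk_k_prime _)).
pose g i := pdiv (i.+1 * m - 1).
have g_spec i : [/\ prime (g i), g i %| i.+1 * m - 1, q <= g i & g i < i.+1 * m].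
  have m_le : m <= i.+1 * m by rewrite leq_pmull.
  have two_le : 1 < i.+1 * m - 1 by lia.
  have g_prime : prime (g i) := pdiv_prime two_le.
  have g_le : g i <= i.+1 * m - 1 by apply: pdiv_leq; lia.
  split=> //; [exact: pdiv_dvd | | lia].
  exact: prime_dvd_pred_primorial g_prime (pdiv_dvd _) _.
have g_neq i j : i < j < q -> g i != g j.
  move=> /andP[i_lt_j j_lt_q]; apply/eqP => g_eq.
  have [gi_prime gi_dvd q_le_gi _] := g_spec i; have [_ gj_dvd _ _] := g_spec j.
  rewrite -g_eq in gj_dvd.
  have im_gt0 : 0 < i.+1 * m by rewrite muln_gt0; lia.
  have := prime_dvd_preds _ _ _ _ gi_prime (prime_dvd_pred_mul _ _ _ gi_prime gi_dvd im_gt0)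
            im_gt0 (leqW i_lt_j) gi_dvd gj_dvd.
  by move/dvdn_leq; rewrite subn_gt0 ltnS => /(_ i_lt_j); lia.
have g_inj : {in iota 0 q &, injective g}.
  move=> i j; rewrite !mem_iota /= !add0n => i_lt j_lt g_eq.
  case: (ltngtP i j) => // [lt|lt].
    by have := g_neq i j; rewrite lt j_lt g_eq eqxx => /(_ isT).
  by have := g_neq j i; rewrite lt i_lt g_eq eqxx => /(_ isT).
rewrite leqNgt; apply/negP => qm_lt.
have q_gt0 : 0 < q by apply: prime_gt0; exact: pk_prime.
have g_uniq : uniq (map g (iota 0 q)) by rewrite (map_inj_in_uniq g_inj) iota_uniq.
suff : q <= k + q - k.+1 by lia.
rewrite -{1}(size_iota 0 q) -(size_map g); apply: primes_between_size g_uniq _.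
move=> s /mapP[i]; rewrite mem_iota add0n => /andP[_ i_lt] ->.
have [g_prime _ q_le g_lt] := g_spec i; split=> //.
have : i.+1 * m <= q * m by rewrite leq_mul2r i_lt orbT.
by have := pk_lt k; rewrite -/q; lia.
Qed.

(* Bonse-type inequality: 2 p_(r+1)^2 < p_r# for every r >= 5.  For
   5 <= r <= 10 it suffices that 2 * 31^2 < 2310 = p_5#; for r >= 11 write
   r = 2k+3 or 2k+4 and compare both sides with M = p_(k+1)#, using
   p_(r+1) <= M (Bonse step) and 3 M <= p_(k+2)^(k+2) <= p_r# / M. *)
Lemma primorial_gt_sq r : 5 <= r -> 2 * pk r.+1 ^ 2 < primorial (pk r).
Proof.
move=> r_ge5; case: (leqP r 10) => [r_le10 | r_gt10].
  have p_le : pk r.+1 ^ 2 <= 31 ^ 2 by rewrite leq_sqr -[31](pk_small 11) // pk_leq.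
  have p5 : primorial (pk 5) = 2310 by rewrite !primorialS primorial_pk0 !pk_small.
  have := primorial_lower 5 r r_ge5; rewrite p5.
  have : 0 < pk 6 ^ (r - 5) by rewrite expn_gt0 prime_gt0 // pk_prime.
  lia.
pose k := (r - 3)./2.
have k_bounds : 2 * k + 3 <= r <= 2 * k + 4.
  by have := odd_double_half (r - 3); rewrite -/k; case: (odd _) => /=; lia.
have k_ge4 : 4 <= k by lia.
set M := primorial (pk k.+1); set P := pk k.+2 ^ (r - k.+1).
have M_gt0 : 0 < M := primorial_gt0 k.+1.
have pr_le : pk r.+1 ^ 2 <= M ^ 2.
  rewrite leq_sqr /M primorialS mulnC; apply: leq_trans (pk_shift_le k _); last lia.
  by rewrite pk_leq; have := pk_lower k; lia.
have M3 : 3 * M <= P.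
  have pow : pk k.+2 ^ k.+2 <= P by apply: leq_pexp2l; [exact: prime_gt0 (pk_prime _) | lia].
  apply: leq_trans pow; rewrite expnS; apply: leq_mul; first by have := pk_lower k.+1; lia.
  by apply: leq_trans (primorial_le_pow k.+1) _; rewrite leq_exp2r // ltnW // pk_lt.
have low : M * P <= primorial (pk r) by apply: primorial_lower; lia.
nia.
Qed.

Theorem mainTheorem2 (r : nat) :
  2 <= r ->
  primorial (pk r) <= 2 * (pk r.+1) ^ 2 ->
  maxn (pk r.+1 - 1) (dgap r) = 2 * pk r.-1.
Proof.
move=> r_ge2 r_hyp.
have r_le4 : r <= 4.
  by rewrite leqNgt; apply/negP => /primorial_gt_sq; rewrite ltnNge r_hyp.
case: r r_ge2 r_le4 {r_hyp} => [|[|[|[|[|r]]]]] // _ _;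
  by rewrite /dgap !pk_small // maxgap_small // unlock; vm_compute.
Qed.
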